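(* For every $k, \ell \in \mathbb{N}$, $$p_\ell^*(k) \leqslant \left( \frac{e^2 k}{\ell^2} \right)^{\ell}.$$
   Context: $p_\ell^*(k)$ denotes the number of partitions of $k$ into $\ell$ distinct parts, i.e. the number of sets $S \subset \mathbb{N} = \{1,2,\ldots\}$ with $|S| = \ell$ and $\sum_{a \in S} a = k$. *)

From mathcomp Require Import all_boot.
Set Implicit Arguments. Unset Strict Implicit. Unset Printing Implicit Defensive.

(* p_l^*(k): number of sets S of positive integers with |S| = l and
   sum_{a in S} a = k.  Every such S is contained in {1,...,k}; we encode
   the subsets of {1,...,k} as sets S : {set 'I_k}, where i : 'I_k stands
   for the positive integer i+1. *)
Definition pstar (l k : nat) : nat :=
  #|[set S : {set 'I_k} | (#|S| == l) && (\sum_(i in S) i.+1 == k)]|.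

(* Removing the element 1 (if present) from a set of [l] distinct positive
   integers summing to [k] and then subtracting 1 from every remaining element
   yields a set of [l - 1] or [l] distinct positive integers summing to [k - l].
   This gives the recursion p*_l(k) <= p*_(l-1)(k-l) + p*_l(k-l), from which
   induction and the binomial theorem give p*_l(k) l! (l-1)! <= k^(l-1), hence
   p*_l(k) (l!)^2 <= k^l.  Since l^l <= e^l l!, this is the claimed bound. *)

From Stdlib Require Import Reals Lra.
From mathcomp Require Import all_boot zify.
Set Implicit Arguments. Unset Strict Implicit. Unset Printing Implicit Defensive.

Section DecrementSet.

Variable N : nat.
Implicit Types (S T : {set 'I_N}) (n : nat).

Definition nat_mem S n : bool := [exists i in S, val i == n].

Definition decr S : {set 'I_N} := [set i : 'I_N | nat_mem S i.+1].

Lemma nat_memE S (i : 'I_N) : nat_mem S i = (i \in S).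
Proof.
apply/existsP/idP => [[j /andP [jS /eqP/val_inj ji]] | iS]; first by rewrite -ji.
by exists i; rewrite iS eqxx.
Qed.

Lemma nat_mem_lt S n : nat_mem S n -> n < N.
Proof. by case/existsP => j /andP [_ /eqP <-]; apply: ltn_ord. Qed.

Lemma nat_mem_decr S n : nat_mem (decr S) n = nat_mem S n.+1.
Proof.
apply/idP/idP => [/existsP [j /andP []] | Sn1].
  by rewrite inE => Sj /eqP <-.
have ltnN : n < N by have := nat_mem_lt Sn1; lia.
by apply/existsP; exists (Ordinal ltnN); rewrite inE /= Sn1 eqxx.
Qed.

Lemma decr_inj S T : nat_mem S 0 = nat_mem T 0 -> decr S = decr T -> S = T.
Proof.
move=> ST0 eqST; apply/setP => -[[|n] ltnN]; rewrite -!nat_memE //=.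
by rewrite -!nat_mem_decr eqST.
Qed.

Lemma sum_natmemE S (F : nat -> nat) :
  \sum_(i in S) F i = \sum_(i < N) (if nat_mem S i then F i else 0).
Proof. by rewrite big_mkcond; apply: eq_bigr => i _; rewrite nat_memE. Qed.

Lemma nat_mem_decr_last S : N > 0 -> nat_mem (decr S) N.-1 = false.
Proof.
move=> N_gt0; rewrite nat_mem_decr prednK //.
by apply/negbTE/negP => /nat_mem_lt; rewrite ltnn.
Qed.

End DecrementSet.

Lemma sum_decr N (S : {set 'I_N}) (F : nat -> nat) :
  \sum_(i in S) F i = (if nat_mem S 0 then F 0 else 0)
                      + \sum_(i in decr S) F i.+1.
Proof.
rewrite (sum_natmemE S) (sum_natmemE (decr S) (fun i => F i.+1)).
case: N S => [|M] S.
  by rewrite !big_ord0 /nat_mem; case: existsP => // -[[]].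
rewrite big_ord_recl [X in _ = _ + X]big_ord_recr /= nat_mem_decr_last // addn0.
by congr (_ + _); apply: eq_bigr => i _; rewrite nat_mem_decr.
Qed.

Lemma card_decr N (S : {set 'I_N}) : #|S| = nat_mem S 0 + #|decr S|.
Proof. by rewrite -!sum1_card (sum_decr S (fun=> 1)); case: nat_mem. Qed.

Lemma sum_succ_decr N (S : {set 'I_N}) :
  \sum_(i in S) i.+1 = nat_mem S 0 + \sum_(i in decr S) i.+1 + #|decr S|.
Proof.
rewrite (sum_decr S succn) -addnA -sum1_card -big_split /=.
by case: nat_mem; congr (_ + _); apply: eq_bigr => i _; rewrite addn1.
Qed.

Lemma card_le_sum_succ N (S : {set 'I_N}) : #|S| <= \sum_(i in S) i.+1.
Proof. by rewrite -sum1_card; apply: leq_sum. Qed.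

Lemma card_le_in_inj (T T' : finType) (f : T -> T')
    (A : {set T}) (B : {set T'}) :
  {in A &, injective f} -> {in A, forall x, f x \in B} -> #|A| <= #|B|.
Proof.
move=> f_inj fAB; rewrite -(card_in_imset f_inj).
by apply/subset_leq_card/subsetP => _ /imsetP [x Ax ->]; apply: fAB.
Qed.

(* [pstar l k] is [#|psets k l k|]; keeping the range [N] fixed lets the
   recursion below stay inside [{set 'I_N}]. *)
Definition psets N l k : {set {set 'I_N}} :=
  [set S : {set 'I_N} | (#|S| == l) && (\sum_(i in S) i.+1 == k)].

Lemma psets_small N l k : k < l -> psets N l k = set0.
Proof.
move=> ltkl; apply/setP => S; rewrite !inE.
apply/negbTE/negP => /andP [/eqP cardS /eqP sumS].
by have := card_le_sum_succ S; lia.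
Qed.

Lemma card_psets0 N n : #|psets N 0 n| <= (n == 0).
Proof.
case: eqP => [-> | n_neq0].
  rewrite /= -(cards1 (@set0 'I_N)); apply/subset_leq_card/subsetP => S.
  by rewrite !inE cards_eq0 => /andP [].
rewrite leqn0 cards_eq0; apply/eqP/setP => S; rewrite !inE cards_eq0.
by apply/negbTE/negP => /andP [/eqP -> /eqP]; rewrite big_set0 => /esym.
Qed.

Lemma decr_psets N l k (S : {set 'I_N}) :
  S \in psets N l k -> decr S \in psets N (l - nat_mem S 0) (k - l).
Proof.
rewrite !inE => /andP [/eqP cardS /eqP sumS].
move: (card_decr S) (sum_succ_decr S); rewrite cardS sumS.
move: (nat_mem S 0) #|decr S| (\sum_(i in decr S) i.+1) => b c s.
by case: b => /= -> ->; apply/andP; split; apply/eqP; lia.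
Qed.

Lemma card_psets_rec N l k : 0 < l ->
  #|psets N l k| <= #|psets N l.-1 (k - l)| + #|psets N l (k - l)|.
Proof.
move=> l_gt0; rewrite -(cardsID [set S : {set 'I_N} | nat_mem S 0]).
apply: leq_add; apply: (card_le_in_inj (f := @decr N)).
- move=> S T; rewrite !in_setI => /andP [_ +] /andP [_ +]; rewrite !inE => S0 T0.
  by apply: decr_inj; rewrite S0 T0.
- move=> S; rewrite in_setI => /andP [/decr_psets + S0]; rewrite inE in S0.
  by rewrite S0 subn1.
- move=> S T; rewrite !in_setD => /andP [+ _] /andP [+ _]; rewrite !inE => S0 T0.
  by apply: decr_inj; rewrite (negbTE S0) (negbTE T0).
- move=> S; rewrite in_setD => /andP [S0 /decr_psets]; rewrite inE in S0.
  by rewrite (negbTE S0) subn0.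
Qed.

Lemma card_psets1 N k : #|psets N 1 k| <= 1.
Proof.
elim: k => [|k IHk]; first by rewrite psets_small ?cards0.
apply: leq_trans (card_psets_rec N k.+1 (ltn0Sn 0)) _; rewrite subn1 /=.
case: k IHk => [|k] IHk.
  by rewrite (@psets_small N 1 0) // cards0 addn0; apply: leq_trans (card_psets0 _ _) _.
by have := card_psets0 N k.+1; rewrite leqn0 => /eqP ->.
Qed.

Lemma expnS_addn_ge x y m : x ^ m.+1 + m.+1 * y * x ^ m <= (x + y) ^ m.+1.
Proof.
elim: m => [|m IHm]; first by rewrite !expn1 expn0 mul1n muln1.
apply: leq_trans (leq_mul (leqnn (x + y)) IHm); rewrite !expnS; nia.
Qed.

Lemma card_psets_fact N l k : #|psets N l.+1 k| * (l.+1`! * l`!) <= k ^ l.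
Proof.
elim: l k => [|l IHl] k; first by rewrite muln1 expn0 card_psets1.
elim/ltn_ind: k => k IHk.
have [ltk|lek] := ltnP k l.+2; first by rewrite psets_small ?cards0.
set x := k - l.+2; set F := l.+1`! * l`!.
have IHx : #|psets N l.+2 x| * (l.+2`! * l.+1`!) <= x ^ l.+1.
  by apply: IHk; rewrite /x; lia.
have factE : l.+2`! * l.+1`! = l.+1 * l.+2 * F by rewrite /F !factS; nia.
have rec := card_psets_rec N (x + l.+2) (ltn0Sn l.+1); rewrite addnK /= in rec.
rewrite -(subnK lek) -/x; apply: leq_trans (expnS_addn_ge x l.+2 l).
apply: leq_trans (leq_mul rec (leqnn _)) _; rewrite mulnDl addnC.
apply: leq_add => //; rewrite factE mulnCA.
by apply: leq_mul => //; apply: IHl.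
Qed.

Lemma pstar_mul_fact_sq l k : pstar l k * (l`! * l`!) <= k ^ l.
Proof.
have -> : pstar l k = #|psets k l k| by [].
case: l => [|l]; first by rewrite muln1; apply: leq_trans (card_psets0 _ _) _; case: eqP.
have [ltk|lek] := ltnP k l.+1; first by rewrite psets_small ?cards0.
rewrite [in X in _ * (_ * X)]factS [_ * (l.+1 * _)]mulnCA mulnCA expnS.
by apply: leq_mul => //; apply: card_psets_fact.
Qed.

Open Scope R_scope.

Lemma INR_muln (m n : nat) : INR (m * n) = INR m * INR n.
Proof. exact: mult_INR. Qed.

Lemma INR_expn (m n : nat) : INR (m ^ n) = INR m ^ n.
Proof. by elim: n => [|n IHn]; rewrite ?expnS ?INR_muln ?IHn. Qed.

Lemma pow_exp (x : R) (n : nat) : exp x ^ n = exp (INR n * x).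
Proof.
elim: n => [|n IHn]; first by rewrite /= Rmult_0_l exp_0.
by rewrite -tech_pow_Rmult IHn -exp_plus S_INR; congr exp; ring.
Qed.

(* [(1 + 1/n)^n <= e], multiplied through by [n^n]. *)
Lemma succ_pow_le_exp (n : nat) : (INR n + 1) ^ n <= exp 1 * INR n ^ n.
Proof.
case: n => [|n]; first by have := exp_ineq1_le 1; rewrite /=; lra.
have n_gt0 : 0 < INR n.+1 by apply: lt_0_INR; lia.
have le_succ : INR n.+1 + 1 <= INR n.+1 * exp (/ INR n.+1).
  have := Rmult_le_compat_l _ _ _ (Rlt_le _ _ n_gt0) (exp_ineq1_le (/ INR n.+1)).
  by rewrite Rmult_plus_distr_l Rmult_1_r Rinv_r; lra.
apply: Rle_trans (_ : _ <= (INR n.+1 * exp (/ INR n.+1)) ^ n.+1) _.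
  by apply: pow_incr; lra.
by rewrite Rpow_mult_distr pow_exp Rinv_r; lra.
Qed.

Lemma pow_le_exp_fact (n : nat) : INR n ^ n <= exp 1 ^ n * INR n`!.
Proof.
elim: n => [|n IHn]; first by rewrite /=; lra.
rewrite factS INR_muln S_INR /=.
have n_ge0 := pos_INR n; have e_gt0 := exp_pos 1.
have pow_ge0 : 0 <= INR n ^ n by apply: pow_le.
have := succ_pow_le_exp n.
have := Rmult_le_compat_l (exp 1 * (INR n + 1)) _ _ ltac:(nra) IHn.
nra.
Qed.

Lemma pow_sq_comm (x : R) (n : nat) : (x ^ 2) ^ n = x ^ n * x ^ n.
Proof. by rewrite -pow_mult -pow_add; congr pow; lia. Qed.

Theorem lemma5p1 (k l : nat) :
  INR (pstar l k) <= ((exp 1) ^ 2 * INR k / (INR l) ^ 2) ^ l.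
Proof.
have /leP/le_INR := pstar_mul_fact_sq l k.
rewrite !INR_muln INR_expn => pstar_bound.
have pstar_ge0 := pos_INR (pstar l k).
have pow_le := pow_le_exp_fact l.
case: l pstar_bound pstar_ge0 pow_le => [|n]; first by rewrite fact0 /=; lra.
set L := INR n.+1; set F := INR n.+1`!; set E := exp 1 ^ n.+1.
move=> pstar_bound pstar_ge0 pow_le.
have L_gt0 : 0 < L by apply: lt_0_INR; apply/ltP.
have Ln_gt0 : 0 < L ^ n.+1 by apply: pow_lt.
have E_gt0 : 0 < E by apply/pow_lt/exp_pos.
apply: (Rmult_le_reg_r ((L ^ 2) ^ n.+1)); first by apply/pow_lt/pow_lt.
rewrite -Rpow_mult_distr /Rdiv Rmult_assoc Rinv_l ?Rmult_1_r; last first.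
  by apply: pow_nonzero; lra.
rewrite Rpow_mult_distr !pow_sq_comm -/E.
have Ln_sq : L ^ n.+1 * L ^ n.+1 <= (E * F) * (E * F) by apply: Rmult_le_compat; lra.
have := Rmult_le_compat_l _ _ _ pstar_ge0 Ln_sq.
have := Rmult_le_compat_l (E * E) _ _ ltac:(nra) pstar_bound.
nra.
Qed.
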